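(* Let $\psi:K\to V$ satisfy, for all $k<k'$ in $K$, $\psi(k)\le\psi(k')$ and $\frac{k}{k'}\psi(k')\le\psi(k)$. Then the mechanism $(f,p)$ defined by $(f(v,k),p(v,k))=(0,0,0)$ if $v\le\psi(k)$ and $(f(v,k),p(v,k))=(k,1,\psi(k))$ otherwise (a ratio-dependent posted price mechanism) is incentive compatible and individually rational.
   Context: An agent has private type $(v,k)\in V\times K$, $V=[0,1]$, $K=(0,1]$, and from an outcome $(a_1,a_2,t)$ with $a_1,a_2\in[0,1]$ (quantities of two divisible goods) and $t\in\mathbb{R}$ (payment by the agent) gets utility $U_{(v,k)}(a_1,a_2,t)=v\min\{a_1/k,a_2\}-t$. A mechanism is a pair $(f,p)$ with $f=(f_1,f_2):V\times K\to[0,1]^2$, $p:V\times K\to\mathbb{R}$. It is incentive compatible if $U_{(v,k)}(f(v,k),p(v,k))\ge U_{(v,k)}(f(v',k'),p(v',k'))$ for all types $(v,k),(v',k')$, and individually rational if $U_{(v,k)}(f(v,k),p(v,k))\ge0$ for all $(v,k)$. *)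

From Stdlib Require Import Reals.
Open Scope R_scope.

Definition inV (v : R) : Prop := 0 <= v <= 1.
Definition inK (k : R) : Prop := 0 < k <= 1.

(* Outcome: (a1, a2, t) with a1, a2 in [0,1], t real. *)
Definition utility (v k a1 a2 t : R) : R := v * Rmin (a1 / k) a2 - t.

Record mechanism := Mechanism {
  f1 : R -> R -> R;
  f2 : R -> R -> R;
  pay : R -> R -> R }.

Definition feasible (M : mechanism) : Prop :=
  forall v k, inV v -> inK k ->
    0 <= f1 M v k <= 1 /\ 0 <= f2 M v k <= 1.

Definition incentive_compatible (M : mechanism) : Prop :=
  forall v k v' k', inV v -> inK k -> inV v' -> inK k' ->
    utility v k (f1 M v k) (f2 M v k) (pay M v k)
    >= utility v k (f1 M v' k') (f2 M v' k') (pay M v' k').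

Definition individually_rational (M : mechanism) : Prop :=
  forall v k, inV v -> inK k ->
    utility v k (f1 M v k) (f2 M v k) (pay M v k) >= 0.

Definition posted_price (psi : R -> R) : mechanism :=
  Mechanism
    (fun v k => if Rle_dec v (psi k) then 0 else k)
    (fun v k => if Rle_dec v (psi k) then 0 else 1)
    (fun v k => if Rle_dec v (psi k) then 0 else psi k).

(* Reporting truthfully yields max(0, v - psi k).  The only alternative to
   buying nothing is a bundle (k', 1) at price psi k'; a type with ratio k
   values it at v min(k'/k, 1).  If k <= k' this is v, at the higher price
   psi k' >= psi k.  If k' < k it is the fraction k'/k of v, and the price
   psi k' >= (k'/k) psi k makes the deviation worth at most (k'/k)(v - psi k). *)
From Stdlib Require Import Reals Lra.
Open Scope R_scope.

Lemma Rdiv_lt_1 a b : 0 < b -> a < b -> a / b < 1.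
Proof.
  intros Hb Hab. apply (Rmult_lt_reg_r b); [lra |].
  unfold Rdiv. rewrite Rmult_assoc, Rinv_l by lra. lra.
Qed.

Lemma Rle_1_div a b : 0 < b -> b <= a -> 1 <= a / b.
Proof.
  intros Hb Hab. apply (Rmult_le_reg_r b); [lra |].
  unfold Rdiv. rewrite Rmult_assoc, Rinv_l by lra. lra.
Qed.

Lemma Rmult_le_Rmax0 r x : 0 <= r <= 1 -> r * x <= Rmax 0 x.
Proof.
  intros Hr. destruct (Rle_dec x 0) as [Hx | Hx].
  - rewrite Rmax_left by lra. nra.
  - rewrite Rmax_right by lra. nra.
Qed.

Lemma utility_nothing v k : utility v k 0 0 0 = 0.
Proof.
  unfold utility, Rdiv. rewrite Rmult_0_l, Rmin_left by lra. ring.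
Qed.

Lemma posted_price_truthful_utility psi v k : k <> 0 ->
  utility v k (f1 (posted_price psi) v k) (f2 (posted_price psi) v k)
    (pay (posted_price psi) v k) = Rmax 0 (v - psi k).
Proof.
  intros Hk. simpl. destruct (Rle_dec v (psi k)) as [Hle | Hgt].
  - rewrite utility_nothing, Rmax_left by lra. reflexivity.
  - unfold utility. rewrite Rdiv_diag, Rmin_left, Rmax_right by lra. ring.
Qed.

Lemma posted_price_feasible psi : feasible (posted_price psi).
Proof.
  intros v k _ Hk. unfold inK in Hk. simpl.
  destruct (Rle_dec v (psi k)); lra.
Qed.

Lemma posted_price_individually_rational psi :
  individually_rational (posted_price psi).
Proof.
  intros v k _ Hk. unfold inK in Hk.
  rewrite posted_price_truthful_utility by lra.
  apply Rle_ge, Rmax_l.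
Qed.

Section PostedPriceIC.

Variable psi : R -> R.

Hypothesis psi_nondecreasing :
  forall k k', inK k -> inK k' -> k < k' -> psi k <= psi k'.

Hypothesis psi_ratio_le :
  forall k k', inK k -> inK k' -> k < k' -> k / k' * psi k' <= psi k.

Lemma buy_bundle_utility_le v k k' : inK k -> inK k' ->
  utility v k k' 1 (psi k') <= Rmax 0 (v - psi k).
Proof.
  intros Hk Hk'. pose proof Hk as [k_gt0 _]. pose proof Hk' as [k'_gt0 _].
  unfold utility. destruct (Rlt_or_le k' k) as [Hlt | Hle].
  - assert (ratio_lt_1 : k' / k < 1) by (apply Rdiv_lt_1; lra).
    assert (ratio_gt_0 : 0 < k' / k) by (apply Rdiv_lt_0_compat; lra).
    pose proof (psi_ratio_le k' k Hk' Hk Hlt) as price_ge.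
    rewrite Rmin_left by lra.
    apply Rle_trans with (k' / k * (v - psi k)); [nra |].
    apply Rmult_le_Rmax0. lra.
  - assert (ratio_ge_1 : 1 <= k' / k) by (apply Rle_1_div; lra).
    assert (price_ge : psi k <= psi k').
    { destruct (Rle_lt_or_eq_dec k k' Hle) as [Hlt | <-]; [|lra].
      exact (psi_nondecreasing k k' Hk Hk' Hlt). }
    rewrite Rmin_right by lra.
    pose proof (Rmax_r 0 (v - psi k)). lra.
Qed.

Lemma posted_price_incentive_compatible :
  incentive_compatible (posted_price psi).
Proof.
  intros v k v' k' _ Hk _ Hk'. pose proof Hk as [k_gt0 _].
  rewrite posted_price_truthful_utility by lra.
  apply Rle_ge. simpl. destruct (Rle_dec v' (psi k')).
  - rewrite utility_nothing. apply Rmax_l.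
  - exact (buy_bundle_utility_le v k k' Hk Hk').
Qed.

End PostedPriceIC.

Theorem proposition1 (psi : R -> R) :
  (forall k, inK k -> inV (psi k)) ->
  (forall k k', inK k -> inK k' -> k < k' ->
     psi k <= psi k' /\ (k / k') * psi k' <= psi k) ->
  feasible (posted_price psi) /\
  incentive_compatible (posted_price psi) /\
  individually_rational (posted_price psi).
Proof.
  intros _ psi_monotone.
  split; [apply posted_price_feasible | split].
  - apply posted_price_incentive_compatible.
    + intros k k' Hk Hk' Hlt. exact (proj1 (psi_monotone k k' Hk Hk' Hlt)).
    + intros k k' Hk Hk' Hlt. exact (proj2 (psi_monotone k k' Hk Hk' Hlt)).
  - apply posted_price_individually_rational.
Qed.
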